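(* Let $\mathcal{A}$ be a strongly tight GFG-NRW whose language is recognized by some GFG-NBW. Then every state $q$ of $\mathcal{A}$ that appears in some good set of the acceptance condition does not belong to a rejecting cycle of $\mathcal{A}$.
   Context: An automaton $\langle\Sigma,Q,Q_0,\delta,\alpha\rangle$ has $\delta:Q\times\Sigma\to2^Q$; runs are accepting if the set of infinitely visited states satisfies $\alpha$. Rabin ($\alpha$ a set of pairs $\langle E,F\rangle$, $E$ the bad set, $F$ the good set): a set $S$ is accepting iff some pair has $S\cap E=\emptyset$ and $S\cap F\neq\emptyset$. A cycle of $\mathcal{A}$ is a sequence $q_0,\ldots,q_k$ with $q_0=q_k$ and $q_{i+1}\in\delta(q_i,a_i)$ for some letters $a_i$; it is rejecting if its set of states is not accepting. NRW/NBW: nondeterministic Rabin/Büchi word automaton. $\mathcal{A}$ is GFG if there is a strategy $g:\Sigma^*\to Q$ such that for every $w=a_1a_2\cdots$, $g(\epsilon),g(a_1),g(a_1a_2),\ldots$ is a run on $w$, accepting whenever $w\in L(\mathcal{A})$. Finite-state strategies are transducers $g=\langle\Sigma,Q,M,m_0,\rho,\tau\rangle$ (finite memories $M$, $\rho:M\times\Sigma\to M$ extended to words from $m_0$, $\tau:M\to Q$, $g(u)=\tau(\rho(u))$); $m$ is a memory of $q$ if $\tau(m)=q$. $\mathcal{A}_g=\langle\Sigma,M,m_0,\rho,\alpha_g\rangle$ where $\alpha_g$ replaces each set $F$ in $\alpha$ by $\{m\mid\tau(m)\in F\}$. A transition $\langle q,a,q'\rangle$ is used by $g$ if $q=g(u)$,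 $q'=g(ua)$ for some $u$. A combination of paths from a set $P$ of paths is the union of the element sets of a nonempty subset of $P$. For memories $m\neq m'$ with $\tau(m)=\tau(m')$, $m$ is replaceable by $m'$ if the set of paths of $\mathcal{A}_g$ from $m'$ to $m$ is empty or all its combinations are accepting. $\mathcal{A}$ is tight w.r.t. a finite-state strategy $g$ witnessing its GFGness if every transition is used by $g$ and no memory is replaceable by a different memory of the same state. A path of $\mathcal{A}_g$ is $q$-exclusive accepting if its memory set is accepting but that set minus the memories of $q$ is not. $\mathcal{A}$ is strongly tight if for some such $g$ it is tight w.r.t. $g$ and every state $q$ in some good set has a $q$-exclusive accepting cycle in $\mathcal{A}_g$. *)

From mathcomp Require Import all_boot.
Set Implicit Arguments. Unset Strict Implicit. Unset Printing Implicit Defensive.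

Section Automata.
Variable Sigma : finType.

Definition rabin_acc (T : finType) (alpha : seq ({set T} * {set T}))
    (S : T -> Prop) : Prop :=
  exists EF, EF \in alpha /\ (forall x, S x -> x \notin EF.1) /\
             (exists x, S x /\ x \in EF.2).

Definition buchi_acc (T : finType) (F : {set T}) (S : T -> Prop) : Prop :=
  exists x, S x /\ x \in F.

Definition inf_set (T : Type) (r : nat -> T) (x : T) : Prop :=
  forall n, exists m, n <= m /\ r m = x.

Record nrw (Q : finType) := NRW {
  nrw_init  : {set Q};
  nrw_delta : Q -> Sigma -> {set Q};
  nrw_alpha : seq ({set Q} * {set Q}) }.

Record nbw (Q : finType) := NBW {
  nbw_init  : {set Q};
  nbw_delta : Q -> Sigma -> {set Q};
  nbw_F     : {set Q} }.

Definition is_run (Q : finType) (init : {set Q}) (delta : Q -> Sigma -> {set Q})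
    (w : nat -> Sigma) (r : nat -> Q) : Prop :=
  r 0 \in init /\ forall i, r i.+1 \in delta (r i) (w i).

Definition nrw_lang (Q : finType) (A : nrw Q) (w : nat -> Sigma) : Prop :=
  exists r, is_run (nrw_init A) (nrw_delta A) w r /\
            rabin_acc (nrw_alpha A) (inf_set r).

Definition nbw_lang (Q : finType) (B : nbw Q) (w : nat -> Sigma) : Prop :=
  exists r, is_run (nbw_init B) (nbw_delta B) w r /\
            buchi_acc (nbw_F B) (inf_set r).

(* the run g(eps), g(a1), g(a1 a2), ... induced by a strategy on w;
   mkseq w i = [:: w 0; ...; w i.-1] = a1 ... ai *)
Definition strat_run (Q : Type) (g : seq Sigma -> Q) (w : nat -> Sigma) :
  nat -> Q := fun i => g (mkseq w i).

Definition gfg_strategy_nrw (Q : finType) (A : nrw Q) (g : seq Sigma -> Q) :=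
  forall w, is_run (nrw_init A) (nrw_delta A) w (strat_run g w) /\
            (nrw_lang A w -> rabin_acc (nrw_alpha A) (inf_set (strat_run g w))).

Definition gfg_strategy_nbw (Q : finType) (B : nbw Q) (g : seq Sigma -> Q) :=
  forall w, is_run (nbw_init B) (nbw_delta B) w (strat_run g w) /\
            (nbw_lang B w -> buchi_acc (nbw_F B) (inf_set (strat_run g w))).

Definition is_gfg_nbw (Q : finType) (B : nbw Q) : Prop :=
  exists g, gfg_strategy_nbw B g.

Definition fs_strat (Q M : finType) (m0 : M) (rho : M -> Sigma -> M)
    (tau : M -> Q) : seq Sigma -> Q :=
  fun u => tau (foldl rho m0 u).

Definition alpha_g (Q M : finType) (tau : M -> Q)
    (alpha : seq ({set Q} * {set Q})) : seq ({set M} * {set M}) :=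
  map (fun EF : {set Q} * {set Q} => ([set m | tau m \in EF.1], [set m | tau m \in EF.2])) alpha.

Definition g_edge (M : finType) (rho : M -> Sigma -> M) : rel M :=
  fun m m' => [exists a, m' == rho m a].

Definition a_edge (Q : finType) (delta : Q -> Sigma -> {set Q}) : rel Q :=
  fun q q' => [exists a, q' \in delta q a].

Definition g_path_from_to (M : finType) (rho : M -> Sigma -> M) (m1 m2 : M)
    (s : seq M) : Prop :=
  exists p, s = m1 :: p /\ path (g_edge rho) m1 p /\ last m1 p = m2.

Definition replaceable (Q M : finType) (alpha : seq ({set Q} * {set Q}))
    (rho : M -> Sigma -> M) (tau : M -> Q) (m m' : M) : Prop :=
  m <> m' /\ tau m = tau m' /\
  ((forall s, ~ g_path_from_to rho m' m s) \/
   (forall P : seq M -> Prop,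
      (exists s, P s) -> (forall s, P s -> g_path_from_to rho m' m s) ->
      rabin_acc (alpha_g tau alpha) (fun x => exists s, P s /\ x \in s))).

Definition used (Q : finType) (g : seq Sigma -> Q) (q : Q) (a : Sigma) (q' : Q) :=
  exists u, q = g u /\ q' = g (rcons u a).

Definition tight_wrt (Q M : finType) (A : nrw Q) (m0 : M)
    (rho : M -> Sigma -> M) (tau : M -> Q) : Prop :=
  (forall q a q', q' \in nrw_delta A q a -> used (fs_strat m0 rho tau) q a q') /\
  (forall m m', m <> m' -> tau m = tau m' -> ~ replaceable (nrw_alpha A) rho tau m m').

Definition q_exclusive_accepting_cycle (Q M : finType) (alpha : seq ({set Q} * {set Q}))
    (rho : M -> Sigma -> M) (tau : M -> Q) (q : Q) : Prop :=
  exists (m : M) (p : seq M),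
    p != [::] /\ path (g_edge rho) m p /\ last m p = m /\
    rabin_acc (alpha_g tau alpha) (fun x => x \in m :: p) /\
    ~ rabin_acc (alpha_g tau alpha) (fun x => x \in m :: p /\ tau x <> q).

Definition in_good_set (Q : finType) (A : nrw Q) (q : Q) : Prop :=
  exists EF, EF \in nrw_alpha A /\ q \in EF.2.

Definition strongly_tight (Q : finType) (A : nrw Q) : Prop :=
  exists (M : finType) (m0 : M) (rho : M -> Sigma -> M) (tau : M -> Q),
    gfg_strategy_nrw A (fs_strat m0 rho tau) /\
    tight_wrt A m0 rho tau /\
    (forall q, in_good_set A q ->
       q_exclusive_accepting_cycle (nrw_alpha A) rho tau q).

Definition on_rejecting_cycle (Q : finType) (A : nrw Q) (q : Q) : Prop :=
  exists (q0 : Q) (p : seq Q),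
    p != [::] /\ path (a_edge (nrw_delta A)) q0 p /\ last q0 p = q0 /\
    q \in q0 :: p /\
    ~ rabin_acc (nrw_alpha A) (fun x => x \in q0 :: p).

End Automata.

From mathcomp Require Import all_boot.
From Stdlib Require Import Classical IndefiniteDescription.
Set Implicit Arguments. Unset Strict Implicit. Unset Printing Implicit Defensive.

(* Let g witness strong tightness, let q lie in a good set and on a rejecting
   cycle C, and let D be a q-exclusive accepting cycle of A_g through a memory
   m_q of q.  Tightness lets A_g follow C: every transition of C is taken from
   some memory because g uses it, and two memories of one state are joined by a
   walk whose states, together with C, still form a rejecting set, which is what
   non-replaceability says.  Hence there is a cycle T at m_q whose states cover C
   and form a rejecting set; m_q is reachable because g uses the transitions of C.
   Since L(A) is recognized by a GFG-NBW, the union of an accepting cycle v and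
   any cycle t at a reachable memory is accepting: in u v^N0 t v^N1 t ... choose
   each N_i so that the GFG-NBW visits an accepting state inside v^N_i, which is
   possible because the prefix read so far followed by v^omega is in L(A).  The
   word is then accepted by the NBW, hence by g, whose run visits infinitely
   often exactly the memories of v and t.
   For D and T, a witnessing Rabin pair avoids the bad states on C, so its good
   state is not in C and in particular is not q; then either D without the
   memories of q or T is accepting, a contradiction. *)

Definition img (T U : Type) (f : T -> U) (V : T -> Prop) : U -> Prop :=
  fun y => exists2 x, V x & f x = y.

Section RabinSets.
Variables (T : finType) (alpha : seq ({set T} * {set T})).

Lemma rabin_acc_ext (S1 S2 : T -> Prop) :
  (forall x, S1 x <-> S2 x) -> rabin_acc alpha S1 -> rabin_acc alpha S2.
Proof.
move=> S12 [EF [EFa [noE [x [S1x xF]]]]].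
exists EF; split=> //; split; first by move=> y /S12 /noE.
by exists x; split=> //; apply/S12.
Qed.

Lemma rabin_acc_union (S1 S2 : T -> Prop) :
  rabin_acc alpha (fun x => S1 x \/ S2 x) -> rabin_acc alpha S1 \/ rabin_acc alpha S2.
Proof.
move=> [EF [EFa [noE [x [[S1x|S2x] xF]]]]]; [left|right]; exists EF; split=> //.
  by split=> [y S1y|]; [apply: noE; left | exists x].
by split=> [y S2y|]; [apply: noE; right | exists x].
Qed.

Lemma rabin_acc_union_del (S1 S2 : T -> Prop) x0 : S2 x0 ->
  rabin_acc alpha (fun x => S1 x \/ S2 x) ->
  rabin_acc alpha (fun x => S1 x /\ x <> x0) \/ rabin_acc alpha S2.
Proof.
move=> S2x0 acc; apply: rabin_acc_union; apply: rabin_acc_ext acc => x.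
case: (eqVneq x x0) => [->|ne]; first by split=> [_|[[]|]]; right.
by split=> [[S1x|S2x]|[[S1x _]|S2x]]; [left; split=> //; apply/eqP|right|left|right].
Qed.

End RabinSets.

Lemma rabin_acc_alpha_g (Q M : finType) (tau : M -> Q)
    (alpha : seq ({set Q} * {set Q})) (V : M -> Prop) :
  rabin_acc (alpha_g tau alpha) V <-> rabin_acc alpha (img tau V).
Proof.
split.
  case=> _ [/mapP [EF EFa ->] [noE [x [Vx]]]]; rewrite inE => xF.
  exists EF; split=> //; split; last by exists (tau x); split=> //; exists x.
  by move=> _ [y Vy <-]; have := noE y Vy; rewrite inE.
case=> EF [EFa [noE [_ [[x Vx <-] xF]]]].
exists ([set m | tau m \in EF.1], [set m | tau m \in EF.2]); split; first exact: map_f.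
split; last by exists x; rewrite inE.
by move=> y Vy; rewrite inE; apply: noE; exists y.
Qed.

Lemma buchi_acc_of_inf_often (T : finType) (F : {set T}) (r : nat -> T) :
  (forall n, exists2 i, n <= i & r i \in F) -> buchi_acc F (inf_set r).
Proof.
move=> often; apply: NNPP => not_acc.
have finitely_often x : x \in F -> exists N, forall i, N <= i -> r i != x.
  move=> xF; apply: NNPP => inf_x; apply: not_acc; exists x; split=> // n.
  apply: NNPP => none; apply: inf_x; exists n => i ni; apply/eqP => rix.
  by apply: none; exists i.
have bound (s : seq T) : exists N, forall i, N <= i -> r i \in F -> r i \notin s.
  elim: s => [|x s [N HN]]; first by exists 0.
  case: (boolP (x \in F)) => [/finitely_often [Nx HNx]|xF].
    exists (maxn N Nx) => i; rewrite geq_max => /andP [Ni Nxi] riF.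
    by rewrite in_cons negb_or HNx // HN.
  exists N => i Ni riF; rewrite in_cons negb_or HN // andbT.
  by apply: contraNneq xF => <-.
have [N HN] := bound (enum T); have [i Ni riF] := often N.
by move: (HN i Ni riF); rewrite mem_enum.
Qed.

Definition word_pow (Sigma : Type) (v : seq Sigma) n := flatten (nseq n v).

Lemma word_powSr (Sigma : Type) (v : seq Sigma) n : word_pow v n.+1 = word_pow v n ++ v.
Proof. by elim: n => [|n IH]; rewrite /word_pow /= ?cats0 // -catA -IH. Qed.

Lemma size_word_pow_ge (Sigma : Type) (v : seq Sigma) n :
  0 < size v -> n <= size (word_pow v n).
Proof. by move=> v_ne; elim: n => //= n IH; rewrite size_cat -add1n leq_add. Qed.

Section Walks.
Variables (Sigma M : finType) (rho : M -> Sigma -> M).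

Definition visited x w := x :: scanl rho x w.

Lemma mem_visited_head x w : x \in visited x w.
Proof. exact: mem_head. Qed.

Lemma last_scanl x w : last x (scanl rho x w) = foldl rho x w.
Proof. by elim: w x => //= a w IH x; rewrite IH. Qed.

Lemma visitedP x w y :
  reflect (exists2 n, n <= size w & foldl rho x (take n w) = y) (y \in visited x w).
Proof.
apply: (iffP (nthP x)) => [[n]|[n nw <-]]; rewrite /visited /= size_scanl.
  by rewrite ltnS => nw <-; exists n; rewrite ?nth_cons_scanl.
by exists n; rewrite ?nth_cons_scanl.
Qed.

Lemma mem_visited_cat x w1 w2 y :
  (y \in visited x (w1 ++ w2)) =
  (y \in visited x w1) || (y \in visited (foldl rho x w1) w2).
Proof.
rewrite /visited scanl_cat -cat_cons mem_cat [y \in _ :: scanl _ (foldl _ _ _) _]in_cons.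
by case: eqP => [->|//]; rewrite orbT -last_scanl mem_last.
Qed.

Lemma path_visited x p : path (g_edge rho) x p ->
  exists2 w, visited x w = x :: p & foldl rho x w = last x p.
Proof.
elim: p x => [|y p IH] x /=; first by exists [::].
case/andP=> /existsP [a /eqP ->] /IH [w vis_w fold_w].
by exists (a :: w) => //; move: vis_w; rewrite /visited /= => -[->].
Qed.

Lemma g_path_visited x y s : g_path_from_to rho x y s ->
  exists2 w, visited x w = s & foldl rho x w = y.
Proof. by case=> p [-> [/path_visited [w vis_w fold_w] <-]]; exists w. Qed.

Lemma mem_visited_detour x w1 w2 t : foldl rho (foldl rho x w1) t = foldl rho x w1 ->
  visited x (w1 ++ w2) ++ visited x (w1 ++ t ++ w2) =i
  visited x (w1 ++ w2) ++ visited (foldl rho x w1) t.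
Proof.
move=> t_closed y; rewrite !mem_cat !mem_visited_cat t_closed.
by case: (y \in visited x w1); case: (y \in visited _ w2); case: (y \in visited _ t).
Qed.

Lemma foldl_word_pow x v n : foldl rho x v = x -> foldl rho x (word_pow v n) = x.
Proof. by move=> v_closed; elim: n => //= n IH; rewrite foldl_cat v_closed. Qed.

Lemma visited_word_pow x v n : foldl rho x v = x ->
  visited x (word_pow v n.+1) =i visited x v.
Proof.
move=> v_closed y; elim: n => [|n IH]; first by rewrite /word_pow /= cats0.
by rewrite [word_pow _ _.+1]/= mem_visited_cat v_closed IH orbb.
Qed.

Lemma closed_walk_cover x (U : M -> Prop) : U x ->
  (forall z, U z -> exists w,
     [/\ foldl rho x w = x, z \in visited x w & forall y, y \in visited x w -> U y]) ->
  exists2 w, foldl rho x w = x & forall y, y \in visited x w <-> U y.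
Proof.
move=> Ux through.
suff [w [w_closed wU Uw]] : exists w, [/\ foldl rho x w = x,
    forall y, y \in visited x w -> U y & forall y, y \in enum M -> U y -> y \in visited x w].
  by exists w => // y; split=> [/wU|/Uw]; rewrite ?mem_enum; apply.
elim: (enum M) => [|z zs [w [w_closed wU Uw]]].
  by exists [::]; split=> // y; rewrite mem_seq1 => /eqP ->.
have [Uz|nUz] := classic (U z); last first.
  by exists w; split=> // y; rewrite in_cons => /orP [/eqP -> /nUz|/Uw].
have [c [c_closed zc cU]] := through z Uz.
exists (w ++ c); split; first by rewrite foldl_cat w_closed.
  by move=> y; rewrite mem_visited_cat w_closed => /orP [/wU|/cU].
move=> y; rewrite in_cons mem_visited_cat w_closed => /orP [/eqP -> _|y_zs Uy].
  by rewrite zc orbT.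
by rewrite Uw.
Qed.

End Walks.

Section BlockWord.
Variables (Sigma : Type) (a0 : Sigma) (blk : seq Sigma -> seq Sigma) (pre : seq Sigma).

Fixpoint block_prefix n :=
  if n is n'.+1 then block_prefix n' ++ blk (block_prefix n') else pre.

(* [a0] is never read: position i lies inside [block_prefix i.+1]. *)
Definition block_word i := nth a0 (block_prefix i.+1) i.

Lemma block_prefix_le n k : n <= k -> exists s, block_prefix k = block_prefix n ++ s.
Proof.
move/subnKC <-; elim: (k - n) => [|d [s IH]]; first by exists [::]; rewrite addn0 cats0.
by rewrite addnS /= IH -catA; eexists.
Qed.

Hypothesis blk_nonempty : forall p, 0 < size (blk p).

Lemma size_block_prefix n : n <= size (block_prefix n).
Proof. by elim: n => //= n IH; rewrite size_cat -addn1 leq_add. Qed.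

Lemma mkseq_block_word n k : k <= size (block_prefix n) ->
  mkseq block_word k = take k (block_prefix n).
Proof.
move=> kn; apply: (@eq_from_nth _ a0); first by rewrite size_mkseq size_takel.
move=> i; rewrite size_mkseq => ik; rewrite nth_mkseq // nth_take //.
have nth_prefix n1 n2 : i < size (block_prefix n1) -> n1 <= n2 ->
    nth a0 (block_prefix n1) i = nth a0 (block_prefix n2) i.
  by move=> i_n1 /block_prefix_le [s ->]; rewrite nth_cat i_n1.
rewrite /block_word; case: (leqP i.+1 n) => [i_n|n_i].
  by apply: (nth_prefix _ _ _ i_n); apply: size_block_prefix.
by symmetry; apply: (nth_prefix _ _ _ (ltnW n_i)); apply: leq_trans ik kn.
Qed.

End BlockWord.

Lemma block_prefix_const (Sigma : Type) (v pre : seq Sigma) n :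
  block_prefix (fun=> v) pre n = pre ++ word_pow v n.
Proof. by elim: n => [|n IH] /=; rewrite ?cats0 // IH word_powSr catA. Qed.

Section BlockRun.
Variables (Sigma Q M : finType) (m0 : M) (rho : M -> Sigma -> M) (tau : M -> Q).
Variables (a0 : Sigma) (blk : seq Sigma -> seq Sigma) (pre : seq Sigma).
Variables (m : M) (S : seq M).
Hypothesis blk_nonempty : forall p, 0 < size (blk p).
Hypothesis pre_m : foldl rho m0 pre = m.
Hypothesis blk_closed : forall p, foldl rho m (blk p) = m.
Hypothesis visited_blk : forall p, visited rho m (blk p) =i S.

Let pref := block_prefix blk pre.
Let W := block_word a0 blk pre.

Lemma foldl_block_prefix n : foldl rho m0 (pref n) = m.
Proof. by elim: n => //= n IH; rewrite foldl_cat IH. Qed.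

Lemma foldl_block_run n r : r <= size (blk (pref n)) ->
  foldl rho m0 (mkseq W (size (pref n) + r)) = foldl rho m (take r (blk (pref n))).
Proof.
move=> r_n; rewrite (mkseq_block_word a0 (pre := pre) blk_nonempty (n := n.+1)) /=; last first.
  by rewrite size_cat leq_add2l.
by rewrite take_cat ltnNge leq_addr /= addKn foldl_cat foldl_block_prefix.
Qed.

Lemma block_run_in_S i : size pre <= i -> foldl rho m0 (mkseq W i) \in S.
Proof.
move=> pre_i.
have ub k : size (pref k) <= i -> k <= i.
  exact/leq_trans/(size_block_prefix pre blk_nonempty).
have [n n_i n_max] := ex_maxnP (ex_intro (fun k => size (pref k) <= i) 0 pre_i) ub.
have r_blk : i - size (pref n) <= size (blk (pref n)).
  rewrite leq_subLR -size_cat leqNgt; apply/negP.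
  by move/ltnW/(n_max n.+1); rewrite ltnn.
rewrite -(subnKC n_i) foldl_block_run // -(visited_blk (pref n)).
by apply/visitedP; exists (i - size (pref n)).
Qed.

Lemma block_run_visits x n : x \in S ->
  exists2 i, n <= i & foldl rho m0 (mkseq W i) = x.
Proof.
rewrite -(visited_blk (pref n)) => /visitedP [r r_n <-].
exists (size (pref n) + r); last exact: foldl_block_run.
exact: leq_trans (size_block_prefix pre blk_nonempty n) (leq_addr _ _).
Qed.

Lemma inf_set_block_run q :
  inf_set (strat_run (fs_strat m0 rho tau) W) q <-> img tau (fun x => x \in S) q.
Proof.
split=> [/(_ (size pre)) [i [pre_i <-]]|[x xS <-] n].
  by exists (foldl rho m0 (mkseq W i)); first exact: block_run_in_S.
by have [i n_i <-] := block_run_visits n xS; exists i.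
Qed.

End BlockRun.

Section GFGBuchiType.
Variables (Sigma Q M Q' : finType) (A : nrw Sigma Q) (B : nbw Sigma Q').
Variables (m0 : M) (rho : M -> Sigma -> M) (tau : M -> Q) (h : seq Sigma -> Q').
Hypothesis gfgA : gfg_strategy_nrw A (fs_strat m0 rho tau).
Hypothesis gfgB : gfg_strategy_nbw B h.
Hypothesis langAB : forall w, nrw_lang A w <-> nbw_lang B w.
Variables (m : M) (v t : seq Sigma).
Hypothesis v_nonempty : 0 < size v.
Hypothesis v_closed : foldl rho m v = m.
Hypothesis t_closed : foldl rho m t = m.
Hypothesis v_acc : rabin_acc (nrw_alpha A) (img tau (fun x => x \in visited rho m v)).

Lemma buchi_visit_in_period pre : foldl rho m0 pre = m ->
  exists2 j, size pre <= j & h (take j (pre ++ word_pow v j.+1)) \in nbw_F B.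
Proof.
move=> pre_m; have a0 : Sigma by case: (v) v_nonempty => [|a].
pose W := block_word a0 (fun=> v) pre.
have v_blk : forall p : seq Sigma, 0 < size ((fun=> v) p) by [].
have W_A : nrw_lang A W.
  exists (strat_run (fs_strat m0 rho tau) W); split; first exact: (gfgA W).1.
  apply: rabin_acc_ext v_acc => q; symmetry.
  exact: (inf_set_block_run _ _ v_blk pre_m (fun=> v_closed) (fun _ _ => erefl)).
have [x [inf_x xF]] := (gfgB W).2 ((langAB W).1 W_A).
have [j [pre_j jx]] := inf_x (size pre).
exists j => //; rewrite -block_prefix_const -(mkseq_block_word a0 v_blk).
  by rewrite /strat_run in jx; rewrite jx.
exact: ltnW (size_block_prefix pre v_blk j.+1).
Qed.

Lemma gfg_buchi_type u : foldl rho m0 u = m ->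
  rabin_acc (nrw_alpha A) (img tau (fun x => x \in visited rho m v ++ visited rho m t)).
Proof.
move=> u_m; have a0 : Sigma by case: (v) v_nonempty => [|a].
have visit p : exists j, foldl rho m0 p = m ->
    size p <= j /\ h (take j (p ++ word_pow v j.+1)) \in nbw_F B.
  case: (eqVneq (foldl rho m0 p) m) => [p_m|ne]; last by exists 0 => p_m; rewrite p_m eqxx in ne.
  by have [j p_j jF] := buchi_visit_in_period p_m; exists j.
have [N NP] := @functional_choice _ _ _ visit.
pose blk p := word_pow v (N p).+1 ++ t.
pose W := block_word a0 blk u.
have blk_nonempty p : 0 < size (blk p).
  by rewrite size_cat addn_gt0 (leq_trans (ltn0Sn _) (size_word_pow_ge _ v_nonempty)).
have blk_closed p : foldl rho m (blk p) = m by rewrite foldl_cat foldl_word_pow.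
have visited_blk p : visited rho m (blk p) =i visited rho m v ++ visited rho m t.
  by move=> x; rewrite mem_visited_cat foldl_word_pow // visited_word_pow // mem_cat.
have W_B : nbw_lang B W.
  exists (strat_run h W); split; first exact: (gfgB W).1.
  apply: buchi_acc_of_inf_often => n; set p := block_prefix blk u n.
  have [p_N pF] := NP p (foldl_block_prefix u_m blk_closed n).
  exists (N p); first exact: leq_trans (size_block_prefix u blk_nonempty n) p_N.
  have Np_le : N p <= size (p ++ word_pow v (N p).+1).
    rewrite size_cat; apply: leq_trans (leq_addl _ _).
    exact: ltnW (size_word_pow_ge _ v_nonempty).
  rewrite /strat_run (mkseq_block_word a0 (pre := u) blk_nonempty (n := n.+1)) /= -/p.
    by rewrite /blk catA takel_cat.
  by rewrite /blk catA size_cat (leq_trans Np_le (leq_addr _ _)).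
have W_acc := (gfgA W).2 ((langAB W).2 W_B).
apply: rabin_acc_ext W_acc => q.
exact: (inf_set_block_run _ _ blk_nonempty u_m blk_closed visited_blk).
Qed.

End GFGBuchiType.

Lemma exclusive_cycle_word (Sigma Q M : finType) (alpha : seq ({set Q} * {set Q}))
    (rho : M -> Sigma -> M) (tau : M -> Q) q :
  q_exclusive_accepting_cycle alpha rho tau q ->
  exists m v1 v2, let V := img tau (fun z => z \in visited rho m (v1 ++ v2)) in
    [/\ 0 < size (v1 ++ v2), foldl rho m (v1 ++ v2) = m, rabin_acc alpha V,
        ~ rabin_acc alpha (fun c => V c /\ c <> q) & tau (foldl rho m v1) = q].
Proof.
move=> [m [p [p_ne [p_path [p_last [p_acc p_excl]]]]]].
have [v vis_v v_closed] := path_visited p_path; rewrite p_last in v_closed.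
have v_excl : ~ rabin_acc alpha
    (fun c => img tau (fun z => z \in visited rho m v) c /\ c <> q).
  move=> acc; apply: p_excl; apply/rabin_acc_alpha_g; apply: rabin_acc_ext acc => c.
  by rewrite vis_v; split=> [[[z zp <-] ne]|[z [zp ne] <-]]; [exists z|split=> //; exists z].
have v_acc : rabin_acc alpha (img tau (fun z => z \in visited rho m v)).
  by rewrite vis_v; apply/rabin_acc_alpha_g.
have v_ne : 0 < size v.
  have scan_v : scanl rho m v = p by move: vis_v; rewrite /visited => -[].
  by rewrite -(size_scanl rho m) scan_v lt0n size_eq0.
have [mD mD_v mD_q] : exists2 mD, mD \in visited rho m v & tau mD = q.
  apply: NNPP => none; apply: v_excl; apply: rabin_acc_ext v_acc => c.
  split=> [[z zv <-]|[]] //; split; first by exists z.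
  by move=> zq; apply: none; exists z.
case/visitedP: mD_v => r _ r_mD.
by exists m, (take r v), (drop r v); rewrite cat_take_drop r_mD.
Qed.

Lemma rejecting_cycle_seq (Sigma Q : finType) (A : nrw Sigma Q) q :
  on_rejecting_cycle A q -> exists C, [/\ cycle (a_edge (nrw_delta A)) C, q \in C
    & ~ rabin_acc (nrw_alpha A) (fun c => c \in C)].
Proof.
move=> [q0 [C [C_ne [C_path [C_last [qC C_rej]]]]]].
have q0C : q0 \in C.
  by case: C C_ne C_last {C_path qC C_rej} => // c s _ <- /=; apply: mem_last.
have memC : q0 :: C =i C by move=> c; rewrite in_cons; case: eqP => // ->.
exists C; split; first by rewrite (cycle_path q0) C_last.
  by rewrite -memC.
by move=> acc; apply: C_rej; apply: rabin_acc_ext acc => c; rewrite memC.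
Qed.

Lemma cycle_from (T : eqType) (e : rel T) (c : seq T) x : cycle e c -> x \in c ->
  exists2 s, path e x (rcons s x) & x :: s =i c.
Proof.
move=> ec /rot_to [i s rot_c]; exists s; last by move=> y; rewrite -rot_c mem_rot.
by move: ec; rewrite -(rot_cycle i) rot_c.
Qed.

Section TightCycle.
Variables (Sigma Q M : finType) (A : nrw Sigma Q).
Variables (m0 : M) (rho : M -> Sigma -> M) (tau : M -> Q).
Hypothesis tight : tight_wrt A m0 rho tau.
Variable C : seq Q.
Hypothesis C_cycle : cycle (a_edge (nrw_delta A)) C.
Hypothesis C_rejecting : ~ rabin_acc (nrw_alpha A) (fun c => c \in C).

(* C is added so that memories over C are safe on their own; safe sets are
   closed under union because Rabin-rejecting sets are. *)
Definition safe (V : M -> Prop) :=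
  ~ rabin_acc (nrw_alpha A) (fun c => c \in C \/ img tau V c).

Lemma safe_ext V1 V2 : (forall z, V1 z <-> V2 z) -> safe V1 -> safe V2.
Proof.
move=> V12 s1 acc; apply: s1; apply: rabin_acc_ext acc => c.
by split=> [[Cc|[z /V12 Vz <-]]|[Cc|[z /V12 Vz <-]]]; [left|right; exists z|left|right; exists z].
Qed.

Lemma safe_union V1 V2 : safe V1 -> safe V2 -> safe (fun z => V1 z \/ V2 z).
Proof.
move=> s1 s2 acc.
have acc' : rabin_acc (nrw_alpha A)
    (fun c => (c \in C \/ img tau V1 c) \/ (c \in C \/ img tau V2 c)).
  apply: rabin_acc_ext acc => c.
  by split=> [[Cc|[z [V1z|V2z] <-]]|[[Cc|[z V1z <-]]|[Cc|[z V2z <-]]]];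
    [left; left|left; right; exists z|right; right; exists z|left
    |right; exists z => //; left|left|right; exists z => //; right].
by case: (rabin_acc_union acc').
Qed.

Lemma safe_of_rejecting V : ~ rabin_acc (nrw_alpha A) (img tau V) -> safe V.
Proof. by move=> rejV /rabin_acc_union []. Qed.

Lemma safe_over_cycle V : (forall z, V z -> tau z \in C) -> safe V.
Proof.
move=> VC acc; apply: C_rejecting; apply: rabin_acc_ext acc => c.
by split=> [[//|[z /VC Cz <-]]|]; [|left].
Qed.

Lemma safe_visited_cat x w1 w2 :
  safe (fun z => z \in visited rho x w1) ->
  safe (fun z => z \in visited rho (foldl rho x w1) w2) ->
  safe (fun z => z \in visited rho x (w1 ++ w2)).
Proof.
move=> s1 s2; apply: safe_ext (safe_union s1 s2) => z.
by rewrite mem_visited_cat; split=> [[]->|/orP //]; rewrite ?orbT.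
Qed.

Definition safe_walk x y :=
  exists2 w, foldl rho x w = y & safe (fun z => z \in visited rho x w).

Lemma safe_walk_trans x y z : safe_walk x y -> safe_walk y z -> safe_walk x z.
Proof.
move=> [w1 xy s1] [w2 yz s2]; exists (w1 ++ w2); first by rewrite foldl_cat xy.
by apply: safe_visited_cat; rewrite ?xy.
Qed.

Lemma not_replaceable_paths m1 m2 : m1 <> m2 -> tau m1 = tau m2 ->
  exists P : seq M -> Prop, [/\ exists s, P s,
    forall s, P s -> g_path_from_to rho m2 m1 s &
    ~ rabin_acc (alpha_g tau (nrw_alpha A)) (fun z => exists s, P s /\ z \in s)].
Proof.
move=> ne same; apply: NNPP => none; apply: (tight.2 m1 m2 ne same); split=> //; split=> //.
right=> P P_ne P_paths; apply: NNPP => rej; by apply: none; exists P; split.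
Qed.

Lemma safe_walk_same_state x y : tau x = tau y -> tau x \in C -> safe_walk x y.
Proof.
move=> xy xC; have [<-|ne] := eqVneq x y.
  by exists [::] => //; apply: safe_over_cycle => z; rewrite mem_seq1 => /eqP ->.
have [P [[s0 Ps0] P_xy P_rej]] := not_replaceable_paths (nesym (elimN eqP ne)) (esym xy).
have [P' [[s1 Ps1] P'_yx P'_rej]] := not_replaceable_paths (elimN eqP ne) xy.
pose U z := (exists s, P s /\ z \in s) \/ (exists s, P' s /\ z \in s).
have safe_U : safe U.
  by apply: safe_union; apply: safe_of_rejecting => /rabin_acc_alpha_g.
have round sa sb : P sa -> P' sb -> exists w, [/\ foldl rho x w = x,
    {subset sa <= visited rho x w}, {subset sb <= visited rho x w} &
    forall z, z \in visited rho x w -> U z].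
  move=> Psa Psb; have [wa vis_a a_y] := g_path_visited (P_xy _ Psa).
  have [wb vis_b b_x] := g_path_visited (P'_yx _ Psb).
  exists (wa ++ wb); rewrite foldl_cat a_y; split=> // [z|z|z].
  - by rewrite mem_visited_cat vis_a => ->.
  - by rewrite mem_visited_cat a_y vis_b => ->; rewrite orbT.
  by rewrite mem_visited_cat a_y vis_a vis_b => /orP [za|zb]; [left; exists sa|right; exists sb].
have [c c_closed c_U] : exists2 c, foldl rho x c = x & forall z, z \in visited rho x c <-> U z.
  apply: closed_walk_cover.
    by left; exists s0; split=> //; case: (P_xy _ Ps0) => p [-> _]; apply: mem_head.
  move=> z [[sa [Psa za]]|[sb [Psb zb]]].
    by have [w [? sub_a _ wU]] := round sa s1 Psa Ps1; exists w; split=> //; apply: sub_a.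
  by have [w [? _ sub_b wU]] := round s0 sb Ps0 Psb; exists w; split=> //; apply: sub_b.
have [w0 vis0 x_y] := g_path_visited (P_xy _ Ps0).
exists (c ++ w0); first by rewrite foldl_cat c_closed.
apply: safe_ext safe_U => z; rewrite mem_visited_cat c_closed.
split=> [/c_U -> //|/orP [/c_U //|]].
by rewrite vis0 => z0; left; exists s0.
Qed.

Lemma used_transition_memory c a c' : c' \in nrw_delta A c a ->
  exists u, tau (foldl rho m0 u) = c /\ tau (rho (foldl rho m0 u) a) = c'.
Proof. by move/tight.1 => [u [-> ->]]; exists u; rewrite /fs_strat foldl_rcons. Qed.

Lemma safe_walk_transition c c' x : a_edge (nrw_delta A) c c' ->
  c \in C -> c' \in C -> tau x = c -> exists2 y, tau y = c' & safe_walk x y.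
Proof.
case/existsP=> a /used_transition_memory [u [u_c u_c']] cC c'C xc.
exists (rho (foldl rho m0 u) a) => //.
apply: (safe_walk_trans (y := foldl rho m0 u)).
  by apply: safe_walk_same_state; rewrite xc ?u_c.
exists [:: a] => //; apply: safe_over_cycle => z.
by rewrite !inE => /orP [] /eqP ->; rewrite ?u_c ?u_c'.
Qed.

Lemma safe_walk_along c p x : path (a_edge (nrw_delta A)) c p ->
  {subset c :: p <= C} -> tau x = c ->
  exists w, [/\ tau (foldl rho x w) = last c p,
    safe (fun z => z \in visited rho x w) &
    {subset c :: p <= [seq tau z | z <- visited rho x w]}].
Proof.
elim: p c x => [|c1 p IH] c x.
  move=> _ sub xc; exists [::]; split=> //.
    by apply: safe_over_cycle => z; rewrite mem_seq1 => /eqP ->; rewrite xc sub ?mem_head.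
  by move=> d; rewrite mem_seq1 => /eqP ->; rewrite /= xc mem_head.
case/andP=> c_c1 path1 sub xc.
have sub1 : {subset c1 :: p <= C} by move=> d d_p; apply: sub; rewrite in_cons d_p orbT.
have [y y_c1 [w1 xy s1]] :=
  safe_walk_transition c_c1 (sub _ (mem_head _ _)) (sub1 _ (mem_head _ _)) xc.
have [w2 [last2 s2 cov2]] := IH c1 y path1 sub1 y_c1.
exists (w1 ++ w2); split; first by rewrite foldl_cat xy.
  by apply: safe_visited_cat; rewrite ?xy.
move=> d; rewrite in_cons => /orP [/eqP ->|/cov2 /mapP [z zv ->]].
  by rewrite -xc; apply: map_f; apply: mem_visited_head.
by apply: map_f; rewrite mem_visited_cat xy zv orbT.
Qed.

Lemma safe_cycle_cover x : tau x \in C ->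
  exists w, [/\ foldl rho x w = x, safe (fun z => z \in visited rho x w) &
    {subset C <= [seq tau z | z <- visited rho x w]}].
Proof.
move=> xC; have [s s_path s_C] := cycle_from C_cycle xC.
have sub : {subset tau x :: rcons s (tau x) <= C}.
  by move=> d; rewrite -s_C !in_cons mem_rcons in_cons orbA orbb.
have [w1 [w1_last s1 cov1]] := safe_walk_along s_path sub (erefl _).
rewrite last_rcons in w1_last.
have [w2 w2_x s2] : safe_walk (foldl rho x w1) x.
  by apply: safe_walk_same_state; rewrite w1_last.
exists (w1 ++ w2); split; first by rewrite foldl_cat.
  exact: safe_visited_cat.
move=> d; rewrite -s_C => d_s.
have /cov1 /mapP [z zv ->] : d \in tau x :: rcons s (tau x).
  by rewrite in_cons mem_rcons d_s orbT.
by apply: map_f; rewrite mem_visited_cat zv.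
Qed.

Lemma cycle_state_reachable c : c \in C -> exists u, tau (foldl rho m0 u) = c.
Proof.
move=> cC; have [s s_path _] := cycle_from C_cycle cC.
have [c' /existsP [a]] : exists c', a_edge (nrw_delta A) c c'.
  by case: s s_path => [|d s] /andP [c_d _]; [exists c|exists d].
by case/used_transition_memory=> u [u_c _]; exists u.
Qed.

Lemma safe_cover_union_rejecting (S T : M -> Prop) q : q \in C -> safe T ->
  (forall c, c \in C -> img tau T c) ->
  ~ rabin_acc (nrw_alpha A) (fun c => img tau S c /\ c <> q) ->
  ~ rabin_acc (nrw_alpha A) (img tau (fun z => S z \/ T z)).
Proof.
move=> qC T_safe T_cov S_excl acc.
have [] := rabin_acc_union_del (S1 := img tau S)
  (S2 := fun c => c \in C \/ img tau T c) (or_introl qC) (rabin_acc_ext _ acc);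
  [|exact: S_excl|exact: T_safe].
move=> c; split=> [[z [Sz|Tz] <-]|[[z Sz <-]|[/T_cov [z Tz <-]|[z Tz <-]]]].
- by left; exists z.
- by right; right; exists z.
- by exists z => //; left.
- by exists z => //; right.
by exists z => //; right.
Qed.

End TightCycle.

Unset Implicit Arguments.

Theorem lemma16 (Sigma Q : finType) (A : nrw Sigma Q) :
  strongly_tight A ->
  (exists (Q' : finType) (B : nbw Sigma Q'),
     is_gfg_nbw B /\ (forall w, nrw_lang A w <-> nbw_lang B w)) ->
  forall q : Q, in_good_set A q -> ~ on_rejecting_cycle A q.
Proof.
move=> [M [m0 [rho [tau [gfgA [tight excl]]]]]] [Q' [B [[h gfgB] langAB]]] q q_good rej.
have [C [C_cycle qC C_rej]] := rejecting_cycle_seq rej.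
have [m [v1 [v2 [v_ne v_closed v_acc v_excl mD_q]]]] := exclusive_cycle_word (excl q q_good).
set mD := foldl rho m v1 in mD_q; have mD_C : tau mD \in C by rewrite mD_q.
have [u0 u0_q] := cycle_state_reachable tight C_cycle qC.
have [w0 w0_mD _] : safe_walk A rho tau C (foldl rho m0 u0) mD.
  by apply: (safe_walk_same_state tight C_rej); rewrite u0_q.
have u_m : foldl rho m0 (u0 ++ w0 ++ v2) = m by rewrite !foldl_cat w0_mD -foldl_cat.
have [t [t_closed t_safe t_cov]] := safe_cycle_cover tight C_cycle C_rej mD_C.
have vt_closed : foldl rho m (v1 ++ t ++ v2) = m.
  by rewrite foldl_cat -/mD foldl_cat t_closed -foldl_cat.
have vt_acc := gfg_buchi_type gfgA gfgB langAB v_ne v_closed vt_closed v_acc u_m.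
have mem_vt z : z \in visited rho m (v1 ++ v2) ++ visited rho m (v1 ++ t ++ v2) <->
    z \in visited rho m (v1 ++ v2) \/ z \in visited rho mD t.
  by rewrite mem_visited_detour // mem_cat; split=> /orP.
apply: (safe_cover_union_rejecting qC t_safe _ v_excl).
  by move=> c /t_cov /mapP [z zt ->]; exists z.
by apply: rabin_acc_ext vt_acc => c; split=> [] [z /mem_vt z_in <-]; exists z.
Qed.
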